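(* Let $\mathcal{G}=(\mathcal{V},\mathcal{R},\mathcal{E})$ be a knowledge graph, let $s\in\mathcal{V}$ be a source node, $q\in\mathcal{R}$ a query relation, and $\delta\ge 0$ an integer offset. Let $\mathbf{x}_q^{(t)}(s,o)$, $t\ge 0$, $o\in\mathcal{V}$, be computed by the truncated generalized Bellman–Ford recursion described in the context, and let $\mathbf{x}_q^F(s,o)=\mathbf{x}_q^{(\mathrm{dist}(s,o)+\delta)}(s,o)$ be the final representation. Then for every $o\in\mathcal{V}$ (with $\mathrm{dist}(s,o)<\infty$), the final representation $\mathbf{x}_q^F(s,o)$ aggregates exactly the path representations of all paths from $s$ to $o$ whose length lies between $\mathrm{dist}(s,o)$ and $\mathrm{dist}(s,o)+\delta$, and no others; that is, $$\mathbf{x}_q^F(s,o)=\bigoplus_{t=\mathrm{dist}(s,o)}^{\mathrm{dist}(s,o)+\delta}\ \bigoplus_{p\in P_{s,o}^t}\ \bigotimes_{i=1}^{|p|} w(e_i).$$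
   Context: A knowledge graph is $\mathcal{G}=(\mathcal{V},\mathcal{R},\mathcal{E})$ with entity set $\mathcal{V}$, relation set $\mathcal{R}$, and edge set $\mathcal{E}$ of triples $(u,r,v)$ with $u,v\in\mathcal{V}$, $r\in\mathcal{R}$, regarded as a directed edge from $u$ to $v$. For $o\in\mathcal{V}$, $\mathcal{E}(o)$ denotes the set of edges of the form $(v,r,o)$ (edges with $o$ as object). All edges have weight 1, and $\mathrm{dist}(s,o)$ is the shortest path distance (number of edges) from $s$ to $o$. For an integer $t\ge 0$, $P^t_{s,o}$ denotes the set of paths (in the loose sense of walks, repeated nodes and edges allowed) of length $t$ from $s$ to $o$; for a path $p=(e_1,\dots,e_{|p|})$, $w(e_i)=\mathbf{w}_q(e_i)$ is the representation of edge $e_i$ conditioned on $q$. The operations $\oplus$ (summation/aggregation) and $\otimes$ (multiplication) are those of the semiring used in the generalized Bellman–Ford algorithm, and $\mathbf{1}_q(s=o)$ denotes the multiplicative identity of the semiring if $s=o$ and the additive identity otherwise. Truncated Bellman–Ford recursion: set $\mathbf{x}_q^{(0)}(s,o)=\mathbf{1}_q(s=o)$. For $t\ge 1$ define the constrained edge set $$\mathcal{C}(s,o,t)=\begin{cases}\emptyset, & \text{if } t<\mathrm{dist}(s,o)\text{ or } t>\mathrm{dist}(s,o)+\delta,\\ \{(v,r,o)\in\mathcal{E}(o)\,:\,\mathrm{dist}(s,v)<\mathrm{dist}(s,o)+\delta\}, & \text{otherwise.}\end{cases}$$ For $t\ge 1$: if $\mathrm{dist}(s,o)\le t\le \mathrm{dist}(s,o)+\delta$,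 then $$\mathbf{x}_q^{(t)}(s,o)=\Big(\bigoplus_{(v,r,o)\in\mathcal{C}(s,o,t)}\mathbf{x}_q^{(t-1)}(s,v)\otimes \mathbf{w}_q(v,r,o)\Big)\oplus \mathbf{x}_q^{(0)}(s,o);$$ otherwise node $o$ is not updated at iteration $t$, i.e. $\mathbf{x}_q^{(t)}(s,o)=\mathbf{x}_q^{(t-1)}(s,o)$. The final representation of the pair is $\mathbf{x}_q^F(s,o)=\mathbf{x}_q^{(\mathrm{dist}(s,o)+\delta)}(s,o)$. *)

From mathcomp Require Import all_boot all_algebra.
From Stdlib Require Import ClassicalEpsilon.
Set Implicit Arguments. Unset Strict Implicit. Unset Printing Implicit Defensive.
Import GRing.Theory.
Local Open Scope ring_scope.

(* Knowledge graph: entities V (finite), relations R (finite), edge set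
   E : {set V * R * V}; an edge ((u, r), v) is the triple (u, r, v),
   a directed edge from u to v. *)

Section KG.
Variables (V Rl : finType) (E : {set V * Rl * V}).

(* [is_walk u o p] : the edge list p = (e_1, ..., e_n) is a walk (path in the
   loose sense) in the graph from u to o. *)
Fixpoint is_walk (u o : V) (p : seq (V * Rl * V)) : bool :=
  match p with
  | [::] => u == o
  | e :: p' => [&& e \in E, e.1.1 == u & is_walk e.2 o p']
  end.

Definition walk_of_length (s o : V) (n : nat) : bool :=
  [exists p : n.-tuple (V * Rl * V), is_walk s o p].

(* shortest path distance; None encodes dist = +infinity (unreachable) *)
Definition dist (s o : V) : option nat :=
  match excluded_middle_informative (exists n, walk_of_length s o n) with
  | left H => Some (ex_minn H)
  | right _ => None
  end.

(* "dist s v < n" with the convention +infinity < n is false *)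
Definition dist_lt (s v : V) (n : nat) : bool :=
  if dist s v is Some d then (d < n)%N else false.

Variables (S : pzSemiRingType) (w : V * Rl * V -> S) (s : V) (delta : nat).

Definition x0 (o : V) : S := if s == o then 1 else 0.

Fixpoint xBF (t : nat) : V -> S :=
  match t with
  | 0 => x0
  | t'.+1 => fun o =>
      match dist s o with
      | Some d =>
          if (d <= t'.+1 <= d + delta)%N then
            (\sum_(e in E | (e.2 == o) && dist_lt s e.1.1 (d + delta))
                xBF t' e.1.1 * w e) + x0 o
          else xBF t' o
      | None => xBF t' o
      end
  end.

End KG.

From mathcomp Require Import all_boot all_algebra zify.
From Stdlib Require Import ClassicalEpsilon.
Set Implicit Arguments. Unset Strict Implicit. Unset Printing Implicit Defensive.
Import GRing.Theory.
Local Open Scope ring_scope.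

(* By induction on t, x^(t)(s,v) is the sum of the weights of all walks from s
   to v of length at most min(t, dist(s,v) + delta).  An update at o appends a
   last edge to the walks already aggregated at its in-neighbours v, and these
   reach length t because dist(s,v) >= dist(s,o) - 1; in-neighbours excluded by
   the truncation carry no walk that short, and no walk is shorter than the
   distance.  At t = dist(s,o) + delta the lengths below dist(s,o) contribute
   nothing, which leaves exactly the window of the theorem. *)

Section BigTuple.
Variables (R : Type) (idx : R) (op : Monoid.com_law idx) (T : finType).

Lemma big_tuple0 (F : 0.-tuple T -> R) : \big[op/idx]_(p : 0.-tuple T) F p = F [tuple].
Proof. by rewrite (big_pred1 [tuple]) // => p; rewrite [p]tuple0; apply/esym/eqP. Qed.

Lemma big_tuple_rcons n (F : n.+1.-tuple T -> R) :
  \big[op/idx]_(p : n.+1.-tuple T) F p =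
  \big[op/idx]_(p : n.-tuple T) \big[op/idx]_(x : T) F [tuple of rcons p x].
Proof.
rewrite pair_bigA; apply: (reindex (fun px : n.-tuple T * T => [tuple of rcons px.1 px.2])).
exists (fun p : n.+1.-tuple T =>
          ([tuple of belast (thead p) (behead p)], last (thead p) (behead p))).
  move=> [p x] _; set t := [tuple of rcons p x].
  have /rcons_inj[belast_t last_t] :
      rcons p x = rcons (belast (thead t) (behead t)) (last (thead t) (behead t)).
    by rewrite -lastI [LHS]/(tval t) {1}(tuple_eta t).
  by congr pair; [apply: val_inj|].
by move=> p _; apply: val_inj; rewrite /= -lastI [in RHS](tuple_eta p).
Qed.

End BigTuple.

Section Walks.
Variables (V Rl : finType) (E : {set V * Rl * V}).

Lemma is_walk_rcons u o p e :
  is_walk E u o (rcons p e) = [&& is_walk E u e.1.1 p, e \in E & e.2 == o].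
Proof.
elim: p u => [|x p IH] u /=; last by rewrite IH !andbA.
by rewrite [u == _]eq_sym; case: (e \in E); case: (e.1.1 == u).
Qed.

Lemma dist_walk s v d : dist E s v = Some d -> walk_of_length E s v d.
Proof.
by rewrite /dist; case: excluded_middle_informative => // H [<-]; case: ex_minnP.
Qed.

Lemma dist_minimal s v d n :
  dist E s v = Some d -> walk_of_length E s v n -> (d <= n)%N.
Proof.
rewrite /dist; case: excluded_middle_informative => // H [<-].
by case: ex_minnP => m _; apply.
Qed.

Lemma walk_dist_lt s v n : walk_of_length E s v n -> dist_lt E s v n.+1.
Proof.
move=> walk_n; rewrite /dist_lt.
case def_d: (dist E s v) => [d|]; first by rewrite ltnS (dist_minimal def_d walk_n).
by move: def_d; rewrite /dist; case: excluded_middle_informative => // [[]]; exists n.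
Qed.

Lemma dist_lt_leq s v m n : (m <= n)%N -> dist_lt E s v m -> dist_lt E s v n.
Proof. by rewrite /dist_lt; case: dist => // d le_mn /leq_trans; apply. Qed.

Lemma dist_edge_leq s e dv d :
  e \in E -> dist E s e.1.1 = Some dv -> dist E s e.2 = Some d -> (d <= dv.+1)%N.
Proof.
move=> Ee /dist_walk/existsP[p walk_p] /dist_minimal; apply; apply/existsP.
by exists [tuple of rcons p e]; rewrite /= is_walk_rcons walk_p Ee eqxx.
Qed.

Variables (S : pzSemiRingType) (w : V * Rl * V -> S).

Definition walk_sum u v n : S :=
  \sum_(p : n.-tuple (V * Rl * V) | is_walk E u v p) \prod_(e <- p) w e.

Lemma walk_sum0 u v : walk_sum u v 0 = x0 S u v.
Proof. by rewrite /walk_sum big_mkcond big_tuple0 /= big_nil. Qed.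

Lemma walk_sumSr u o n :
  walk_sum u o n.+1 = \sum_(e in E | e.2 == o) walk_sum u e.1.1 n * w e.
Proof.
rewrite [LHS]big_mkcond big_tuple_rcons exchange_big [RHS]big_mkcond /=.
apply: eq_bigr => e _.
case: ifP => [/andP[Ee e_o]|not_e_o]; last first.
  by rewrite big1 // => p _; rewrite is_walk_rcons andbC not_e_o.
rewrite mulr_suml [RHS]big_mkcond; apply: eq_bigr => p _.
by rewrite is_walk_rcons Ee e_o andbT big_rcons; case: is_walk; rewrite ?mul0r.
Qed.

Lemma walk_sum_eq0 s v n : ~~ dist_lt E s v n.+1 -> walk_sum s v n = 0.
Proof.
move=> far_v; rewrite /walk_sum big1 // => p walk_p; case/negP: far_v.
by apply: walk_dist_lt; apply/existsP; exists p.
Qed.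

End Walks.

Section BellmanFord.
Variables (V Rl : finType) (E : {set V * Rl * V}) (S : pzSemiRingType).
Variables (w : V * Rl * V -> S) (s : V) (delta : nat).
Local Notation x := (xBF E w s delta).
Local Notation W := (walk_sum E w s).

Lemma relax_walk_sums t o d :
  dist E s o = Some d -> (t < d + delta)%N ->
  (forall v dv, dist E s v = Some dv ->
     x t v = \sum_(0 <= i < (minn t (dv + delta)).+1) W v i) ->
  \sum_(e in E | (e.2 == o) && dist_lt E s e.1.1 (d + delta)) x t e.1.1 * w e =
  \sum_(0 <= i < t.+1) W o i.+1.
Proof.
move=> dist_o t_lt x_t.
under [RHS]eq_bigr do rewrite walk_sumSr.
rewrite exchange_big /= [RHS](bigID (fun e => dist_lt E s e.1.1 (d + delta))) /=.
rewrite [X in _ + X]big1 ?addr0 => [|e /andP[_ far_e]]; last first.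
  rewrite -mulr_suml big_nat big1 ?mul0r // => i /andP[_ lt_i_t].
  by apply: walk_sum_eq0; apply: contra far_e; apply: dist_lt_leq; lia.
apply: eq_big => [e|e /and3P[Ee /eqP e_o near_e]]; first by rewrite andbA.
move: near_e; rewrite /dist_lt -mulr_suml.
case dist_v: (dist E s e.1.1) => [dv|//] _.
have := dist_edge_leq Ee dist_v; rewrite e_o => /(_ _ dist_o) d_le.
have t_le : (t <= dv + delta)%N by lia.
by rewrite (x_t _ _ dist_v) (minn_idPl t_le).
Qed.

Lemma xBF_walk_sums t v dv : dist E s v = Some dv ->
  x t v = \sum_(0 <= i < (minn t (dv + delta)).+1) W v i.
Proof.
elim: t v dv => [|t IHt] v dv dist_v /=.
  by rewrite min0n big_nat1 walk_sum0.
rewrite dist_v; case: ifP => [/andP[_ t_lt] | stale].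
  rewrite (minn_idPl t_lt) (big_nat_recl _ _ _ (leq0n _)) walk_sum0 addrC.
  by rewrite (relax_walk_sums dist_v t_lt IHt).
rewrite (IHt _ _ dist_v); have [le_t|lt_t] := leqP (dv + delta) t.
  by rewrite (minn_idPr (leqW le_t)).
rewrite (minn_idPl lt_t) [RHS](big_nat_recr _ _ _ (leq0n _)) /=.
rewrite [W v t.+1]walk_sum_eq0 ?addr0 // /dist_lt dist_v; lia.
Qed.

End BellmanFord.

Theorem theorem1 (V Rl : finType) (E : {set V * Rl * V}) (S : pzSemiRingType)
    (wq : Rl -> V * Rl * V -> S) (s : V) (q : Rl) (delta : nat)
    (o : V) (d : nat) :
  dist E s o = Some d ->
  xBF E (wq q) s delta (d + delta) o =
  \sum_(d <= t < (d + delta).+1)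
     \sum_(p : t.-tuple (V * Rl * V) | is_walk E s o p)
        \prod_(e <- p) wq q e.
Proof.
move=> dist_o; have le_d : (d <= (d + delta).+1)%N by rewrite leqW ?leq_addr.
rewrite (xBF_walk_sums _ _ _ dist_o) minnn (big_cat_nat (leq0n d) le_d) /=.
rewrite [X in X + _]big_nat big1 ?add0r // => i /andP[_ lt_i_d].
by apply: walk_sum_eq0; rewrite /dist_lt dist_o -leqNgt.
Qed.
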